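(* Consider the lattice Boltzmann scheme described in the context, under acoustic scaling ($\lambda>0$ fixed as $\Delta x\to 0$, with $M$, $S$, $\epsilon$ independent of $\Delta x$), and a local initialisation $w\in\mathbb{R}^{q}$. Then for every $n\in\mathbb{N}^*$ the modified equation of the $n$-th starting scheme is, for $x\in\mathbb{R}^{d}$, \begin{align*} \phi(0,x) &+ n\frac{\Delta x}{\lambda}\partial_t\phi(0,x) + O(\Delta x^2)\\ &= w_1\phi(0,x) - n\Delta x\Big(\mathcal{G}_{11}w_1 + \sum_{r=2}^{q}\mathcal{G}_{1r}w_r + \frac{1}{n}\sum_{r=2}^{q}\mathcal{G}_{1r}(\epsilon_r w_1 - w_r)\sum_{\ell=0}^{n-1}\pi_{n-\ell}(s_r)\Big)\phi(0,x) + O(\Delta x^2), \end{align*} where $\pi_\ell(X)=1-(1-X)^\ell$ for $\ell\in\mathbb{N}$. In particular, for every smooth $\phi$, $((E^n w)_1\phi(0,\cdot))(x)$ admits the expansion given by the right-hand side.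
   Context: Fix $d\ge 1$, $q\ge 1$, discrete velocities $c_1,\dots,c_q\in\mathbb{Z}^d$, an invertible moment matrix $M\in GL_q(\mathbb{R})$, a relaxation matrix $S=\mathrm{diag}(s_1,\dots,s_q)$ with $s_i\in(0,2]$ for $i\in\{2,\dots,q\}$ and $s_1\in\mathbb{R}$, and equilibrium coefficients $\epsilon\in\mathbb{R}^q$ with $\epsilon_1=1$. The collision matrix is $K=I-S(I-\epsilon e_1^T)$, with $e_1$ the first canonical vector. Let $\Delta x>0$ be the space step, $\lambda>0$ the lattice velocity and $\Delta t=\Delta x/\lambda$. For $\ell=1,\dots,d$ the shift operator $x_\ell$ acts on functions of $x\in\mathbb{R}^d$ by $(x_\ell\phi)(x)=\phi(x-\Delta x\, e_\ell)$, and for $c\in\mathbb{Z}^d$, $x^{c}=x_1^{c_1}\cdots x_d^{c_d}$. The transport matrix is $T=M\,\mathrm{diag}(x^{c_1},\dots,x^{c_q})M^{-1}$ and the evolution matrix is $E=TK$ (entries are Laurent polynomials in the shifts). The time shift is $(z\phi)(t)=\phi(t+\Delta t)$. The lattice Boltzmann scheme updates the vector of moments by $m(t+\Delta t,\cdot)=E\,m(t,\cdot)$; $m_1$ is the conserved moment. The matrix of first-order differential operators is $\mathcal{G}=M\,\mathrm{diag}(c_1\cdot\nabla_x,\dots,c_q\cdot\nabla_x)M^{-1}$ with entries $\mathcal{G}_{ij}$. Given the lattice discretisation $m_1^\circ$ of an initial datum, the initialisation is $m(0,x)=w\,m_1^\circ(x)$; it is local if $w\in\mathbb{R}^q$. The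 $n$-th starting scheme ($n\in\mathbb{N}^*$) is $m_1(n\Delta t,x)=(E^n w)_1 m_1^\circ(x)$. Its modified equation is obtained by replacing the discrete unknowns by a smooth function $\phi(t,x)$, so that the scheme reads $(z^n\phi)(0,x)=((E^nw)_1\phi(0,\cdot))(x)$, and Taylor-expanding both sides in powers of $\Delta x$ as $\Delta x\to 0$. *)

From HB Require Import structures.
From mathcomp Require Import all_boot all_order all_algebra.
From mathcomp Require Import all_classical all_reals all_analysis.
Set Implicit Arguments. Unset Strict Implicit. Unset Printing Implicit Defensive.
Import Order.TTheory GRing.Theory Num.Theory.
Import numFieldNormedType.Exports.
Local Open Scope ring_scope.

Section LBM.
Variable R : realType.

Fixpoint iter_dir {V : normedModType R} (vs : seq V) (f : V -> R) : V -> R :=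
  match vs with
  | [::] => f
  | v :: vs' => fun x => derive (iter_dir vs' f) x v
  end.

Definition smooth {V : normedModType R} (f : V -> R) : Prop :=
  forall vs : seq V,
    continuous (iter_dir vs f) /\ (forall (x v : V), derivable (iter_dir vs f) x v).

Variables (d q : nat).
Definition vel (c : 'I_q -> 'rV[int]_d) (k : 'I_q) : 'rV[R]_d :=
  map_mx (fun z : int => z%:~R) (c k).

(* collision matrix K = I - S (I - eps e_1^T), S = diag(s) ;
   index 1 of the paper is ord0 here *)
Definition collision (s eps : 'I_q -> R) : 'M[R]_q :=
  \matrix_(i, j) ((i == j)%:R - s i * ((i == j)%:R - eps i * ((j : nat) == 0%N)%:R)).

(* action of the transport matrix T = M diag(x^{c_1},...,x^{c_q}) M^{-1}
   on a vector of functions; (x^c f)(x) = f(x - dx c) *)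
Definition transport_act (dx : R) (c : 'I_q -> 'rV[int]_d) (M : 'M[R]_q)
  (m : 'I_q -> 'rV[R]_d -> R) : 'I_q -> 'rV[R]_d -> R :=
  fun i x => \sum_(k < q) M i k *
     \sum_(j < q) invmx M k j * m j (x - dx *: vel c k).

Definition matrix_act (A : 'M[R]_q) (m : 'I_q -> 'rV[R]_d -> R) :
  'I_q -> 'rV[R]_d -> R := fun i x => \sum_(j < q) A i j * m j x.

Definition evolution_act dx c M (s eps : 'I_q -> R) m :=
  transport_act dx c M (matrix_act (collision s eps) m).

Definition En_w_act dx c M s eps (n : nat) (w : 'I_q -> R)
  (phi : 'rV[R]_d -> R) : 'I_q -> 'rV[R]_d -> R :=
  iter n (evolution_act dx c M s eps) (fun j x => w j * phi x).

Definition Gop (c : 'I_q -> 'rV[int]_d) (M : 'M[R]_q) (i j : 'I_q)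
  (phi : 'rV[R]_d -> R) (x : 'rV[R]_d) : R :=
  \sum_(k < q) M i k * invmx M k j * derive phi x (vel c k).

End LBM.

Definition pipoly {R : ringType} (l : nat) (X : R) : R := 1 - (1 - X) ^+ l.

From HB Require Import structures.
From mathcomp Require Import all_boot all_order all_algebra.
From mathcomp Require Import all_classical all_reals all_analysis.
From mathcomp Require Import ring lra.
Set Implicit Arguments. Unset Strict Implicit. Unset Printing Implicit Defensive.
Import Order.TTheory GRing.Theory Num.Theory.
Import numFieldNormedType.Exports.
Local Open Scope ring_scope.

(* Unrolling [E^n] on [w phi] writes [((E^n w)_1 phi)(x)] as a finite sum
   [\sum_p a_p phi(x - dx V_p)] over all sequences of [n] velocities, [V_p]
   being the total displacement and [a_p] a product of [K] and of the rank-one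
   projectors [P_k = M e_k e_k^T M^-1], which sum to the identity.  A first-order
   Taylor expansion of every term leaves two moments.  The mass [\sum_p a_p] is
   [K^n w], whose first entry is [w_1] since [K] fixes the conserved moment.  The
   first moment [S_n = \sum_p (V_p . grad phi) a_p] satisfies
   [S_(n+1) = K S_n + G K^(n+1) w], and its first entry is evaluated with
   [(K^m w)_r = w_r + pi_m(s_r) (eps_r w_1 - w_r)].  The time side is an
   ordinary second-order Taylor bound. *)

Section Calculus.
Variable R : realType.

Definition bigO_sqr (f : R -> R) := exists C δ : R, 0 < δ /\
  forall h, 0 < h < δ -> `|f h| <= C * h ^+ 2.

Lemma bigO_sqr_ext (f g : R -> R) :
  bigO_sqr f -> (forall h, f h = g h) -> bigO_sqr g.
Proof. by move=> + /funext <-. Qed.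

Lemma bigO_sqr_scale (k : R) f : bigO_sqr f -> bigO_sqr (fun h => k * f h).
Proof.
move=> [C [δ [δ0 Hf]]]; exists (`|k| * C), δ; split => // h hδ.
by rewrite normrM -mulrA ler_wpM2l // Hf.
Qed.

Lemma bigO_sqr_comp_scale (k : R) f : 0 < k -> bigO_sqr f -> bigO_sqr (fun h => f (k * h)).
Proof.
move=> k0 [C [δ [δ0 Hf]]]; exists (C * k ^+ 2), (δ / k); split.
  by rewrite divr_gt0.
move=> h /andP[h0 hδ]; rewrite -mulrA -exprMn Hf //.
by rewrite mulr_gt0 //= mulrC -ltr_pdivlMr.
Qed.

Lemma bigO_sqr_sum (T : Type) (r : seq T) (f : T -> R -> R) :
  (forall i, bigO_sqr (f i)) -> bigO_sqr (fun h => \sum_(i <- r) f i h).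
Proof.
move=> Hf; elim: r => [|i r [C [δ [δ0 Hr]]]].
  by exists 0, 1; split => // h _; rewrite big_nil normr0 mul0r.
have [Ci [δi [δi0 Hi]]] := Hf i.
exists (Ci + C), (Num.min δi δ); split; first by rewrite lt_min δi0 δ0.
move=> h /andP[h0]; rewrite lt_min => /andP[hδi hδ].
rewrite big_cons mulrDl (le_trans (ler_normD _ _)) //.
by apply: lerD; [apply: Hi | apply: Hr]; rewrite h0.
Qed.

Lemma derivable_remainder_le (V : normedModType R) (F : V -> R) a v :
  derivable F a v -> forall e : R, 0 < e ->
  exists2 δ : R, 0 < δ & forall h : R, `|h| < δ ->
    `|F (a + h *: v) - F a - h * 'D_v F a| <= e * `|h|.
Proof.
move=> /cvgrPdist_lt dF e e0; have := dF e e0.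
rewrite near_withinE => /nbhs_norm0P [δ δ0 Fδ]; exists δ => // h /[dup] hδ.
have [-> _|h0] := eqVneq h 0; first by rewrite scale0r addr0 mul0r !subr0 subrr normr0 mulr0.
move=> _; have /= := Fδ h hδ h0; rewrite [h *: v + a]addrC.
set D := 'D_v F a; set dF' := F (a + h *: v) - F a => lt_e.
have -> : dF' - h * D = - h * (D - h^-1 *: dF').
  by rewrite -[h^-1 *: _]/(h^-1 * _); field.
by rewrite normrM normrN mulrC ler_pM2r ?normr_gt0 // ltW.
Qed.

Lemma is_derive_line (V : normedModType R) (F : V -> R) z b t :
  derivable F (z + t *: b) b ->
  is_derive t 1 (fun u : R => F (z + u *: b)) ('D_b F (z + t *: b)).
Proof.
move=> dF.
have quotE : (fun h : R => h^-1 *: (((fun u : R => F (z + u *: b)) \o shift t) (h *: 1)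
            - F (z + t *: b))) =
         (fun h : R => h^-1 *: ((F \o shift (z + t *: b)) (h *: b) - F (z + t *: b))).
  apply/funext => h /=; congr (_ *: (F _ - _)).
  by rewrite -[h *: 1]/(h * 1) mulr1 scalerDl addrCA.
by split; rewrite /derivable /derive quotE.
Qed.

Lemma MVT_line (V : normedModType R) (F : V -> R) z b h :
  (forall y, derivable F y b) -> 0 < h ->
  exists2 c, 0 <= c <= h & F (z + h *: b) - F z = h * 'D_b F (z + c *: b).
Proof.
move=> dF h0; pose g u := F (z + u *: b).
have dg (t : R) : is_derive t (1 : R) g ('D_b F (z + t *: b)) by apply: is_derive_line.
have g_cont : {within `[0, h], continuous g}%classic.
  by apply: derivable_within_continuous => t _; case: (dg t).
have [c ch gE] := MVT_segment (ltW h0) (fun t _ => dg t) g_cont.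
exists c; first by rewrite !(itvP ch).
by rewrite /g scale0r addr0 subr0 mulrC in gE.
Qed.

Lemma taylor_bigO_sqr (g : R -> R) : (forall t, derivable g t 1) ->
  derivable (fun t => 'D_1 g t) 0 1 ->
  bigO_sqr (fun h => g h - g 0 - h * 'D_1 g 0).
Proof.
move=> dg dg'; set D2 := 'D_1 (fun t => 'D_1 g t) 0.
have [δ δ0 rem] := derivable_remainder_le dg' ltr01.
exists (`|D2| + 1), δ; split => // h /andP[h0 hδ].
have [c /andP[c0 ch] gE] : exists2 c, 0 <= c <= h & g h - g 0 = h * 'D_1 g c.
  by have [c ch] := MVT_line 0 (fun y => dg y) h0; rewrite !add0r !scaler1; exists c.
have := rem c; rewrite add0r scaler1 mul1r (ger0_norm c0) => /(_ (le_lt_trans ch hδ)) Dc.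
have Dh : `|'D_1 g c - 'D_1 g 0| <= (`|D2| + 1) * h.
  rewrite -[_ - _](subrK (c * D2)) (le_trans (ler_normD _ _)) //.
  rewrite normrM (ger0_norm c0) mulrDl mul1r addrC lerD //.
  - by rewrite mulrC ler_wpM2l.
  - by apply: le_trans ch.
by rewrite gE -mulrBr normrM (gtr0_norm h0) expr2 mulrCA ler_wpM2l // ltW.
Qed.

(* Mean value theorem along the second leg of [x -> x + h a -> x + h (a + b)],
   then continuity of ['D_b F] at [x]. *)
Lemma deriveDv (V : normedModType R) (F : V -> R) x a b :
  (forall y u, derivable F y u) -> continuous (fun y => 'D_b F y) ->
  'D_(a + b) F x = 'D_a F x + 'D_b F x.
Proof.
move=> dF cDb; set Z := 'D_(a + b) F x - 'D_a F x - 'D_b F x.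
suff : `|Z| <= 0 by rewrite normr_le0 subr_eq0 subr_eq => /eqP ->; rewrite addrC.
apply/ler_addgt0Pr => e e0; rewrite add0r.
have e3 : 0 < e / 3 by rewrite divr_gt0.
have [d1 d10 rem_ab] := derivable_remainder_le (dF x (a + b)) e3.
have [d2 d20 rem_a] := derivable_remainder_le (dF x a) e3.
have /cvgrPdist_le /(_ _ e3) /nbhs_normP [d3 d30 near_x] := cDb x.
set k := `|a| + `|b| + 1; have k0 : 0 < k by rewrite ltr_pwDr // addr_ge0.
set m := Num.min (Num.min d1 d2) (d3 / k).
have m0 : 0 < m by rewrite !lt_min d10 d20 divr_gt0.
have [h h0] : exists2 h, 0 < h & h < m by exists (m / 2); lra.
rewrite !lt_min ltr_pdivlMr // => /andP[/andP[hd1 hd2] hd3].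
have [c /andP[c0 ch] mvt] := MVT_line (x + h *: a) (fun y => dF y b) h0.
have near_y : `|x - (x + h *: a + c *: b)| < d3.
  rewrite -addrA opprD addrA subrr sub0r normrN (le_lt_trans (ler_normD _ _)) //.
  rewrite !normrZ (gtr0_norm h0) (ger0_norm c0) (le_lt_trans _ hd3) // /k.
  have : c * `|b| <= h * `|b| by rewrite ler_wpM2r.
  lra.
have hZ : h * Z = (F (x + h *: a) - F x - h * 'D_a F x)
    - (F (x + h *: (a + b)) - F x - h * 'D_(a + b) F x)
    + h * ('D_b F (x + h *: a + c *: b) - 'D_b F x).
  by rewrite scalerDr addrA -[F (_ + h *: b)](subrK (F (x + h *: a))) mvt /Z; ring.
rewrite -(ler_pM2l h0) -{1}(gtr0_norm h0) -normrM hZ.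
rewrite (le_trans (ler_normD _ _)) // (le_trans (lerD (ler_normB _ _) (lexx _))) //.
have := rem_a h; have := rem_ab h; rewrite (gtr0_norm h0) => /(_ hd1) ab /(_ hd2) a'.
rewrite normrM (gtr0_norm h0) [`|_ - 'D_b F x|]distrC.
have /= /(ler_wpM2l (ltW h0)) bb := near_x _ near_y.
lra.
Qed.

Lemma deriveNv (V : normedModType R) (F : V -> R) x v :
  (forall y u, derivable F y u) -> continuous (fun y => 'D_(- v) F y) ->
  'D_(- v) F x = - 'D_v F x.
Proof.
move=> dF cD; have := deriveDv x v dF cD.
by rewrite subrr derive0 addrC => /esym/eqP; rewrite addr_eq0 => /eqP.
Qed.

Lemma smooth_taylor_dir (V : normedModType R) (F : V -> R) x v : smooth F ->
  bigO_sqr (fun h => F (x - h *: v) - F x + h * 'D_v F x).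
Proof.
move=> sF; have dF : forall y u, derivable F y u := (sF [::]).2.
pose g t := F (x + t *: - v).
have dg t : is_derive t (1 : R) g ('D_(- v) F (x + t *: - v)) by apply: is_derive_line.
have g'E t : 'D_1 g t = 'D_(- v) F (x + t *: - v) by rewrite derive_val.
have dg' : derivable ('D_1 g) 0 1.
  by rewrite (funext g'E); case: (@is_derive_line V ('D_(- v) F) x (- v) 0 ((sF [:: - v]).2 _ _)).
have dg1 t : derivable g t 1 by case: (dg t).
apply: (bigO_sqr_ext (taylor_bigO_sqr dg1 dg')) => h.
rewrite g'E /g scale0r addr0 scalerN deriveNv //; last exact: (sF [:: - v]).1.
by rewrite mulrN opprK.
Qed.

End Calculus.

Section Scheme.
Variables (R : realType) (d q : nat) (c : 'I_q.+1 -> 'rV[int]_d) (M : 'M[R]_q.+1)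
  (s eps w : 'I_q.+1 -> R).
Hypothesis M_unit : M \in unitmx.
Hypothesis eps0 : eps ord0 = 1.

Local Notation K := (collision s eps).

Definition Mproj (k : 'I_q.+1) : 'M[R]_q.+1 := \matrix_(i, j) (M i k * invmx M k j).

Definition col_w : 'cV[R]_q.+1 := \col_i w i.

(* The pairs [(a_p, V_p)] of coefficient vector and total displacement, one for
   each sequence of [n] velocity indices. *)
Fixpoint weighted_shifts n : seq ('cV[R]_q.+1 * 'rV[R]_d) :=
  if n is n'.+1 then
    [seq (Mproj k *m K *m p.1, p.2 + vel R c k)
       | k <- index_enum 'I_q.+1, p <- weighted_shifts n']
  else [:: (col_w, 0)].

Lemma En_w_act_succ dx f n : En_w_act dx c M s eps n.+1 w f =
  evolution_act dx c M s eps (En_w_act dx c M s eps n w f).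
Proof. by []. Qed.

Lemma En_w_act_shifts dx (f : 'rV[R]_d -> R) n i y :
  En_w_act dx c M s eps n w f i y =
  \sum_(p <- weighted_shifts n) p.1 i 0 * f (y - dx *: p.2).
Proof.
elim: n i y => [|n IH] i y; first by rewrite big_seq1 mxE scaler0 subr0.
rewrite En_w_act_succ; have -> : En_w_act dx c M s eps n w f =
    fun l z => (\sum_(p <- weighted_shifts n) f (z - dx *: p.2) *: p.1) l 0.
  apply/funext => l; apply/funext => z; rewrite IH summxE.
  by apply: eq_bigr => p _; rewrite mxE mulrC.
rewrite /= big_allpairs_dep /evolution_act /transport_act /matrix_act.
apply: eq_bigr => k _.
set u := \sum_(p <- weighted_shifts n) f (y - dx *: vel R c k - dx *: p.2) *: p.1.
have -> : \sum_(p <- weighted_shifts n)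
    (Mproj k *m K *m p.1) i 0 * f (y - dx *: (p.2 + vel R c k)) = (Mproj k *m (K *m u)) i 0.
  rewrite mulmxA /u mulmx_sumr summxE; apply: eq_bigr => p _.
  rewrite -scalemxAr [in RHS]mxE mulrC; congr (f _ * _).
  by rewrite scalerDr opprD addrA addrAC.
by rewrite mxE big_distrr; apply: eq_bigr => j _ /=; rewrite !mxE mulrA.
Qed.

Lemma sum_Mproj : \sum_k Mproj k = 1%:M.
Proof.
rewrite -(mulmxV M_unit); apply/matrixP => i j.
by rewrite summxE !mxE; apply: eq_bigr => k _; rewrite mxE.
Qed.

Lemma sum_shift_weights n : \sum_(p <- weighted_shifts n) p.1 = K ^+ n *m col_w.
Proof.
elim: n => [|n IH]; first by rewrite big_seq1 expr0 mul1mx.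
rewrite /= big_allpairs_dep /=.
under eq_bigr => k _ do rewrite -mulmx_sumr IH.
by rewrite -mulmx_suml -mulmx_suml sum_Mproj mul1mx exprS -mulmxE mulmxA.
Qed.

Lemma sum_eq_delta (F : 'I_q.+1 -> R) j : \sum_l (j == l)%:R * F l = F j.
Proof.
rewrite (bigD1 j) //= eqxx mul1r big1 ?addr0 // => l /negbTE.
by rewrite eq_sym => ->; rewrite mul0r.
Qed.

Lemma collision_mulmx (v : 'cV[R]_q.+1) j :
  (K *m v) j 0 = v j 0 - s j * (v j 0 - eps j * v ord0 0).
Proof.
rewrite mxE; under eq_bigr => l _ do rewrite mxE.
rewrite (eq_bigr (fun l => (j == l)%:R * v l 0 - s j * ((j == l)%:R * v l 0)
   + (s j * eps j) * ((ord0 == l)%:R * v l 0))); last first.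
  by move=> l _; rewrite [ord0 == l]eq_sym -[l == ord0]/((l : nat) == 0%N); ring.
by rewrite !big_split /= sumrN -!big_distrr /= !sum_eq_delta; ring.
Qed.

Lemma collision_mulmx0 (v : 'cV[R]_q.+1) : (K *m v) ord0 0 = v ord0 0.
Proof. by rewrite collision_mulmx eps0 mul1r subrr mulr0 subr0. Qed.

Lemma collision_expn m j : (K ^+ m *m col_w) j 0 =
  if j == ord0 then w ord0 else w j + pipoly m (s j) * (eps j * w ord0 - w j).
Proof.
elim: m j => [|m IH] j.
  by rewrite expr0 mul1mx mxE /pipoly expr0 subrr mul0r addr0; case: eqP => // ->.
rewrite exprS -mulmxE -mulmxA collision_mulmx !IH eqxx.
case: eqP => [->|_]; first by rewrite eps0; ring.
by rewrite /pipoly exprS; ring.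
Qed.

Section FirstMoment.
Variable L : 'rV[R]_d -> R.
Hypothesis L_additive : {morph L : u v / u + v}.

Definition grad_mx : 'M[R]_q.+1 := \sum_k L (vel R c k) *: Mproj k.

Lemma first_moment_succ n :
  \sum_(p <- weighted_shifts n.+1) L p.2 *: p.1 =
  K *m (\sum_(p <- weighted_shifts n) L p.2 *: p.1) + grad_mx *m K ^+ n.+1 *m col_w.
Proof.
rewrite /= big_allpairs_dep /=.
under eq_bigr => k _ do under eq_bigr => p _ do rewrite L_additive scalerDl.
under eq_bigr => k _ do rewrite big_split /=.
rewrite big_split /=; congr (_ + _).
  rewrite -[K in K *m _]mul1mx -sum_Mproj !mulmx_suml; apply: eq_bigr => k _.
  by rewrite mulmx_sumr; apply: eq_bigr => p _; rewrite scalemxAr.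
rewrite /grad_mx exprS -mulmxE !mulmxA !mulmx_suml; apply: eq_bigr => k _.
by rewrite -!scalemxAl -!mulmxA -sum_shift_weights -scaler_sumr mulmxA mulmx_sumr.
Qed.

Lemma first_moment n : (\sum_(p <- weighted_shifts n) L p.2 *: p.1) ord0 0 =
  \sum_(l < n) (grad_mx *m K ^+ (n - l) *m col_w) ord0 0.
Proof.
have L0 : L 0 = 0 by apply: (addrI (L 0)); rewrite -L_additive !addr0.
elim: n => [|n IH]; first by rewrite big_seq1 big_ord0 L0 scale0r mxE.
by rewrite first_moment_succ mxE collision_mulmx0 IH big_ord_recl subn0 addrC.
Qed.

Lemma first_moment_expansion n :
  (\sum_(p <- weighted_shifts n) L p.2 *: p.1) ord0 0 =
  n%:R * (grad_mx ord0 ord0 * w ord0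
          + \sum_(r < q.+1 | r != ord0) grad_mx ord0 r * w r)
  + \sum_(r < q.+1 | r != ord0) grad_mx ord0 r * (eps r * w ord0 - w r)
       * \sum_(l < n) pipoly (n - l) (s r).
Proof.
have moment_m m : (grad_mx *m K ^+ m *m col_w) ord0 0 =
    grad_mx ord0 ord0 * w ord0 + \sum_(r < q.+1 | r != ord0) grad_mx ord0 r * w r
    + \sum_(r < q.+1 | r != ord0) grad_mx ord0 r * (eps r * w ord0 - w r) * pipoly m (s r).
  rewrite -mulmxA mxE (bigD1 ord0) //= collision_expn eqxx -addrA -big_split /=.
  by congr (_ + _); apply: eq_bigr => r /negbTE r0; rewrite collision_expn r0; ring.
rewrite first_moment; under eq_bigr do rewrite moment_m.
rewrite big_split /= sumr_const card_ord mulr_natl; congr (_ + _).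
by rewrite exchange_big /=; apply: eq_bigr => r _; rewrite big_distrr.
Qed.

End FirstMoment.

Lemma En_w_act_expansion (F : 'rV[R]_d -> R) x n : smooth F -> (0 < n)%N ->
  bigO_sqr (fun dx => En_w_act dx c M s eps n w F ord0 x
    - (w ord0 * F x
       - n%:R * dx *
         (Gop c M ord0 ord0 F x * w ord0
          + \sum_(r < q.+1 | r != ord0) Gop c M ord0 r F x * w r
          + n%:R^-1 * \sum_(r < q.+1 | r != ord0)
               Gop c M ord0 r F x * (eps r * w ord0 - w r)
               * \sum_(l < n) pipoly (n - l) (s r)))).
Proof.
move=> sF n0; pose L V := 'D_V F x.
have L_additive : {morph L : u v / u + v}.
  by move=> u v; apply: deriveDv; [exact: (sF [::]).2 | exact: (sF [:: v]).1].
have gradE : grad_mx L ord0 = fun j => Gop c M ord0 j F x.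
  apply/funext => j; rewrite summxE; apply: eq_bigr => k _.
  by rewrite !mxE mulrC.
have mass : \sum_(p <- weighted_shifts n) p.1 ord0 0 = w ord0.
  by rewrite -summxE sum_shift_weights collision_expn eqxx.
have moment := first_moment_expansion L_additive n; rewrite gradE summxE in moment.
apply: (bigO_sqr_ext (bigO_sqr_sum (weighted_shifts n)
  (fun p => bigO_sqr_scale (p.1 ord0 0) (smooth_taylor_dir x p.2 sF)))) => dx.
rewrite En_w_act_shifts.
rewrite (eq_bigr (fun p : 'cV[R]_q.+1 * 'rV[R]_d => p.1 ord0 0 * F (x - dx *: p.2) - p.1 ord0 0 * F x
                   + dx * (L p.2 *: p.1) ord0 0)); last first.
  by move=> p _; rewrite mxE /L; ring.
rewrite !big_split /= sumrN -big_distrl -big_distrr /= mass moment.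
by field; rewrite pnatr_eq0 -lt0n.
Qed.

End Scheme.

Lemma smooth_taylor_scaled (R : realType) (g : R -> R) (k : R) : smooth g -> 0 < k ->
  bigO_sqr (fun h => g (k * h) - (g 0 + k * h * 'D_1 g 0)).
Proof.
move=> sg k0; have dg t : derivable g t 1 := (sg [::]).2 t 1.
apply: (bigO_sqr_ext (bigO_sqr_comp_scale k0 (taylor_bigO_sqr dg ((sg [:: 1]).2 0 1)))).
by move=> h; rewrite opprD addrA.
Qed.

Theorem proposition1 (R : realType) (d q : nat) (hd : (0 < d)%N)
  (c : 'I_q.+1 -> 'rV[int]_d) (M : 'M[R]_q.+1) (hM : M \in unitmx)
  (s : 'I_q.+1 -> R) (hs : forall i : 'I_q.+1, i != ord0 -> 0 < s i <= 2)
  (eps : 'I_q.+1 -> R) (heps : eps ord0 = 1)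
  (lambda : R) (hlambda : 0 < lambda)
  (w : 'I_q.+1 -> R) (n : nat) (hn : (0 < n)%N)
  (phi : R -> 'rV[R]_d -> R)
  (hphix : smooth (phi 0))
  (hphit : forall x : 'rV[R]_d, smooth (fun t : R => phi t x))
  (x : 'rV[R]_d) :
  (* left-hand side: (z^n phi)(0,x) = phi(n dx/lambda, x) *)
  (exists C delta : R, 0 < delta /\
     forall dx : R, 0 < dx < delta ->
       `| phi (n%:R * dx / lambda) x
          - (phi 0 x + n%:R * dx / lambda * derive (fun t : R => phi t x) 0 1) |
       <= C * dx ^+ 2)
  /\
  (* right-hand side: ((E^n w)_1 phi(0,.))(x) *)
  (exists C delta : R, 0 < delta /\
     forall dx : R, 0 < dx < delta ->
       `| En_w_act dx c M s eps n w (phi 0) ord0 x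
          - (w ord0 * phi 0 x
             - n%:R * dx *
               (Gop c M ord0 ord0 (phi 0) x * w ord0
                + \sum_(r < q.+1 | r != ord0) Gop c M ord0 r (phi 0) x * w r
                + n%:R^-1 * \sum_(r < q.+1 | r != ord0)
                     Gop c M ord0 r (phi 0) x * (eps r * w ord0 - w r)
                     * \sum_(l < n) pipoly (n - l) (s r))) |
       <= C * dx ^+ 2).
Proof.
split; last exact: En_w_act_expansion.
have k0 : 0 < n%:R / lambda by rewrite divr_gt0 // ltr0n.
apply: (bigO_sqr_ext (smooth_taylor_scaled (hphit x) k0)) => dx.
by rewrite mulrAC.
Qed.
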